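(* Let $K$ be a totally real field, $L/K$ a CM extension with CM type $\Phi$, and $M$ a regular, polarized, special realization over $K$ with coefficients in a number field $E$, of rank $n$ and pure of weight $w(M)$, with Hodge numbers $p_1(\sigma,\varphi)>\dots>p_n(\sigma,\varphi)$ for $\sigma\in J_K,\varphi\in J_E$. Fix $\varphi\in J_E$ and $r\in\{0,\dots,n\}$. If $r>0$, set $a_\tau^{(r,\varphi)}=w(M)-2p_r(\tau|_K,\varphi)+1$ for $\tau\in\Phi$; if $r=0$, set $a_\tau^{(0,\varphi)}=a^{(0)}$ for all $\tau\in\Phi$, where $a^{(0)}$ is a fixed integer with $a^{(0)}<\min\{w(M)-2p_1(\sigma,\psi)\}_{\sigma\in J_K,\psi\in J_E}$ and $a^{(0)}\equiv w(M)+1\pmod 2$. Let $\chi^{(r,\varphi)}$ be an algebraic Hecke character of $L$ of infinity type $(n_\tau^{(r,\varphi)})_{\tau\in J_L}$ with $n_\tau^{(r,\varphi)}-n_{\bar\tau}^{(r,\varphi)}=a_\tau^{(r,\varphi)}$ for all $\tau\in\Phi$. Then: (i) $\chi^{(r,\varphi)}$ is critical, except possibly when $n$ is even and $r=n/2$; in that case $\chi^{(n/2,\varphi)}$ is critical if and only if $p_{n/2}(\sigma,\varphi)\neq p_{n/2+1}(\sigma,\varphi)+1$ for every $\sigma\in J_K$. (ii) $n_\tau^{(r,\varphi)}>n_{\bar\tau}^{(r,\varphi)}$ for one (equivalently every) $\tau\in\Phi$ if and only if $r\in\{\lfloor n/2\rfloor+1,\dots,n\}$.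
   Context: $J_F=\operatorname{Hom}(F,\mathbb C)$; $\bar\tau=c\circ\tau$; a CM type $\Phi\subset J_L$ satisfies $J_L=\Phi\sqcup\bar\Phi$. A realization $M$ over $K$ with coefficients in $E$ (in Deligne's sense of realizations of motives for absolute Hodge cycles) has, for each $\sigma\in J_K$, a Betti realization $M_\sigma$ (an $E$-vector space of dimension $n$ with a Frobenius involution $F_\sigma$) and a Hodge decomposition $M_\sigma\otimes_{E,\varphi}\mathbb C=\bigoplus_{p+q=w(M)}M_\sigma^{pq}(\varphi)$ for $\varphi\in J_E$. $M$ is regular if all $M_\sigma^{pq}(\varphi)$ have dimension at most 1; then $p_1(\sigma,\varphi)>\dots>p_n(\sigma,\varphi)$ are the $p$ with $M_\sigma^{pq}(\varphi)\ne0$, and $p_i(\sigma,\varphi)+p_{n+1-i}(\sigma,\varphi)=w(M)$. $M$ is polarized if there is a nondegenerate morphism $M\otimes_E M\to E(-w(M))$, symmetric if $w(M)$ is even and alternating if odd; $M$ is special if each $F_\sigma$ acts on $M_\sigma^{w(M)/2,w(M)/2}$ by a scalar $\pm1$ independent of $\sigma$. An algebraic Hecke character $\chi$ of $L$ has infinity type $(n_\tau)_{\tau\in J_L}$ meaning $\chi(x)=\tau(x)^{-n_\tau}\bar\tau(x)^{-n_{\bar\tau}}$ on the identity component at the archimedean place of $\tau$; $\chi$ is critical if $n_\tau\ne n_{\bar\tau}$ for all $\tau\in J_L$. *)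

From HB Require Import structures.
From mathcomp Require Import all_boot all_order all_algebra.
Set Implicit Arguments. Unset Strict Implicit. Unset Printing Implicit Defensive.
Import Order.TTheory GRing.Theory Num.Theory.
Local Open Scope ring_scope.

(* J_L with restriction res : J_L -> J_K and c : tau |-> bar tau, for a CM
   (quadratic, totally imaginary) extension L of the totally real field K:
   c is a fixed-point-free involution compatible with restriction, and
   every sigma in J_K has exactly the two extensions tau, bar tau. *)
Definition CM_embeddings (JK JL : finType) (res : JL -> JK) (c : JL -> JL) :=
  [/\ involutive c,
      forall t, c t != t,
      forall t, res (c t) = res t,
      forall t t', res t = res t' -> t' = t \/ t' = c t
    & forall s, exists t, res t = s].

Definition CM_type (JL : finType) (c : JL -> JL) (Phi : {set JL}) :=
  forall t, (t \in Phi) != (c t \in Phi).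

Definition regular_Hodge_numbers (JK JE : finType) (n : nat) (w : int)
    (p : JK -> JE -> nat -> int) :=
  forall s psi,
    (forall i j : nat, (1 <= i)%N -> (i < j)%N -> (j <= n)%N -> p s psi j < p s psi i)
    /\ (forall i : nat, (1 <= i <= n)%N -> p s psi i + p s psi (n.+1 - i)%N = w).

Definition admissible_a0 (JK JE : finType) (w : int)
    (p : JK -> JE -> nat -> int) (a0 : int) :=
  (forall s psi, a0 < w - 2 * p s psi 1%N) /\ (a0 == w + 1 %[mod 2])%Z.

Definition a_exp (JK JL JE : finType) (res : JL -> JK) (w : int)
    (p : JK -> JE -> nat -> int) (a0 : int) (r : nat) (phi : JE) (t : JL) : int :=
  if r == 0%N then a0 else w - 2 * p (res t) phi r + 1.

(* Infinity types (n_tau) of algebraic Hecke characters of the CM field L: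
   n_tau + n_{bar tau} is independent of tau (Weil). *)
Definition Hecke_infinity_type (JL : finType) (c : JL -> JL) (nt : JL -> int) :=
  exists wt : int, forall t, nt t + nt (c t) = wt.

Definition critical (JL : finType) (c : JL -> JL) (nt : JL -> int) :=
  forall t, nt t != nt (c t).

(** Put [m = n + 1 - r], so that regularity and the polarization give
    [a_r = w - 2 p_r + 1 = p_m - p_r + 1].  Since the Hodge numbers strictly
    decrease, [a_r > 0] when [r > n/2] (then [m < r]) and [a_r <= 0] when
    [r <= n/2]; moreover [a_r = 0] forces [p_m = p_r - 1], i.e. [m = r + 1],
    which is the middle case [n = 2r].  For [r = 0] the choice of [a^(0)]
    makes it negative.  As [n_tau - n_{bar tau} = a_tau] on [Phi], and every
    [sigma] is the restriction of some [tau] in [Phi], criticality and the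
    sign of [n_tau - n_{bar tau}] are read off from [a_r]. *)
From HB Require Import structures.
From mathcomp Require Import all_boot all_order all_algebra.
From mathcomp Require Import zify.
Set Implicit Arguments. Unset Strict Implicit. Unset Printing Implicit Defensive.
Import Order.TTheory GRing.Theory Num.Theory.
Local Open Scope ring_scope.

Section RegularHodgeNumbers.

Variables (n : nat) (w : int) (q : nat -> int).
Hypothesis q_decr :
  forall i j : nat, (1 <= i)%N -> (i < j)%N -> (j <= n)%N -> q j < q i.
Hypothesis q_sym :
  forall i : nat, (1 <= i <= n)%N -> q i + q (n.+1 - i)%N = w.

Lemma Hodge_gap_compl (r : nat) : (1 <= r <= n)%N ->
  w - 2 * q r + 1 = q (n.+1 - r)%N - q r + 1.
Proof. by move=> /q_sym <-; lia. Qed.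

Lemma Hodge_gap_gt0 (r : nat) : (n./2 < r <= n)%N -> 0 < w - 2 * q r + 1.
Proof.
move=> /andP[hr rn]; rewrite Hodge_gap_compl; last by lia.
have m_le_r : (n.+1 - r <= r)%N.
  by have := odd_double_half n; case: (odd n) => /=; lia.
case: (ltnP (n.+1 - r) r) => [m_lt_r | r_le_m].
  by have := @q_decr (n.+1 - r) r; lia.
have -> : (n.+1 - r)%N = r by lia.
by rewrite subrr.
Qed.

Lemma Hodge_gap_le0 (r : nat) : (0 < r <= n./2)%N -> w - 2 * q r + 1 <= 0.
Proof.
move=> /andP[r0 hr]; rewrite Hodge_gap_compl; last by lia.
have := odd_double_half n; have := @q_decr r (n.+1 - r).
by case: (odd n) => /=; lia.
Qed.

Lemma Hodge_gap_neq0 (r : nat) : (0 < r <= n)%N ->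
  ~ (~~ odd n /\ r = n./2) -> w - 2 * q r + 1 != 0.
Proof.
move=> /andP[r0 rn] not_middle.
case: (ltnP n./2 r) => hr; first by rewrite gt_eqF // Hodge_gap_gt0 // hr.
have r1 : (r.+1 < n.+1 - r)%N.
  have := odd_double_half n; case: (odd n) not_middle => /=; lia.
rewrite Hodge_gap_compl; last by lia.
by have := @q_decr r r.+1; have := @q_decr r.+1 (n.+1 - r); lia.
Qed.

Lemma Hodge_gap_middle : (0 < n)%N -> ~~ odd n ->
  w - 2 * q n./2 + 1 = q (n./2).+1 + 1 - q n./2.
Proof.
move=> n0 n_even; have := odd_double_half n; rewrite (negbTE n_even) /= => hn.
have -> : (n./2).+1 = (n.+1 - n./2)%N by lia.
by rewrite Hodge_gap_compl; [rewrite addrAC | lia].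
Qed.

Lemma Hodge_first_gap_le0 : (0 < n)%N -> w - 2 * q 1 <= 0.
Proof.
move=> n0; have := @q_sym 1; rewrite subn1 /=.
case: (ltnP 1 n) => [n1 | n_le1]; first by have := @q_decr 1 n; lia.
have -> : n = 1%N by lia.
lia.
Qed.

End RegularHodgeNumbers.

Lemma CM_typeC (JL : finType) (c : JL -> JL) (Phi : {set JL}) (t : JL) :
  CM_type c Phi -> t \notin Phi -> c t \in Phi.
Proof. by move=> /(_ t); case: (t \in Phi); case: (c t \in Phi). Qed.

Lemma critical_CM_type (JL : finType) (c : JL -> JL) (Phi : {set JL})
    (nt : JL -> int) :
  involutive c -> CM_type c Phi ->
  critical c nt <-> (forall t, t \in Phi -> nt t != nt (c t)).
Proof.
move=> cK Phi_CM; split=> [crit t _ | crit_Phi t]; first exact: crit.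
have [|/(CM_typeC Phi_CM)] := boolP (t \in Phi); first exact: crit_Phi.
by move=> /crit_Phi; rewrite cK eq_sym.
Qed.

Lemma CM_type_res_surj (JK JL : finType) (res : JL -> JK) (c : JL -> JL)
    (Phi : {set JL}) (s : JK) :
  CM_embeddings res c -> CM_type c Phi -> exists2 t, t \in Phi & res t = s.
Proof.
move=> [_ _ res_c _ res_surj] Phi_CM; have [t <-] := res_surj s.
have [tP | /(CM_typeC Phi_CM) ctP] := boolP (t \in Phi); first by exists t.
by exists (c t) => //; exact: res_c.
Qed.

Section TwistExponent.

Variables (JK JL JE : finType) (res : JL -> JK) (n : nat) (w : int).
Variables (p : JK -> JE -> nat -> int) (a0 : int) (phi : JE).
Hypotheses (n_gt0 : (0 < n)%N) (p_reg : regular_Hodge_numbers n w p).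
Hypothesis a0_adm : admissible_a0 w p a0.

Lemma admissible_a0_lt0 (s : JK) : a0 < 0.
Proof.
have [p_decr p_sym] := p_reg s phi.
have := Hodge_first_gap_le0 p_decr p_sym n_gt0; have := a0_adm.1 s phi; lia.
Qed.

Lemma a_exp_gt0 (r : nat) (t : JL) : (r <= n)%N ->
  (0 < a_exp res w p a0 r phi t) = (n./2 < r)%N.
Proof.
move=> r_le_n; have [p_decr p_sym] := p_reg (res t) phi; rewrite /a_exp.
have [-> | r_gt0] := posnP r.
  by rewrite lt_gtF // (admissible_a0_lt0 (res t)).
case: ltnP => hr; first by rewrite (Hodge_gap_gt0 p_decr p_sym) // hr.
by apply/negbTE; rewrite -leNgt (Hodge_gap_le0 p_decr p_sym) // r_gt0.
Qed.

Lemma a_exp_neq0 (r : nat) (t : JL) : (r <= n)%N ->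
  ~ (~~ odd n /\ r = n./2) -> a_exp res w p a0 r phi t != 0.
Proof.
move=> r_le_n not_middle; have [p_decr p_sym] := p_reg (res t) phi.
rewrite /a_exp; have [_ | r_gt0] := posnP r.
  by rewrite ltr0_neq0 // (admissible_a0_lt0 (res t)).
by rewrite (Hodge_gap_neq0 p_decr p_sym) // r_gt0.
Qed.

Lemma a_exp_middle (t : JL) : ~~ odd n ->
  a_exp res w p a0 n./2 phi t
    = p (res t) phi (n./2).+1 + 1 - p (res t) phi n./2.
Proof.
move=> n_even; have [_ p_sym] := p_reg (res t) phi.
have half_gt0 : (n./2 != 0)%N.
  by have := odd_double_half n; rewrite (negbTE n_even) /=; lia.
by rewrite /a_exp (negbTE half_gt0) (Hodge_gap_middle p_sym).
Qed.

End TwistExponent.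

Theorem lemma2p4 (JK JL JE : finType) (res : JL -> JK) (c : JL -> JL)
    (Phi : {set JL}) (n : nat) (w : int) (p : JK -> JE -> nat -> int)
    (phi : JE) (r : nat) (a0 : int) (nt : JL -> int) :
  (0 < #|JK|)%N ->
  CM_embeddings res c ->
  CM_type c Phi ->
  (0 < n)%N ->
  regular_Hodge_numbers n w p ->
  admissible_a0 w p a0 ->
  (r <= n)%N ->
  Hecke_infinity_type c nt ->
  (forall t, t \in Phi -> nt t - nt (c t) = a_exp res w p a0 r phi t) ->
  (* (i) *)
  ((~ (~~ odd n /\ r = n./2) -> critical c nt) /\
   (~~ odd n -> r = n./2 ->
      (critical c nt <-> forall s, p s phi n./2 != p s phi (n./2).+1 + 1)))
  /\
  (* (ii) *)
  (((exists2 t, t \in Phi & nt (c t) < nt t) <-> ((n./2).+1 <= r <= n)%N) /\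
   ((forall t, t \in Phi -> nt (c t) < nt t) <-> ((n./2).+1 <= r <= n)%N)).
Proof.
move=> /card_gt0P[s0 _] JLK Phi_CM n_gt0 p_reg a0_adm r_le_n _ nt_Phi.
have [cK _ _ _ _] := JLK.
have a_gt0 := a_exp_gt0 res phi n_gt0 p_reg a0_adm.
have a_neq0 := a_exp_neq0 res phi n_gt0 p_reg a0_adm.
have a_middle := a_exp_middle res a0 phi n_gt0 p_reg.
have critE :
    critical c nt <-> forall t, t \in Phi -> a_exp res w p a0 r phi t != 0.
  rewrite (critical_CM_type _ cK Phi_CM).
  by split=> crit t tP; move: (crit t tP); rewrite -nt_Phi // subr_eq0.
have nt_gtE t : t \in Phi -> (nt (c t) < nt t) = ((n./2).+1 <= r <= n)%N.
  by move=> tP; rewrite -subr_gt0 nt_Phi // a_gt0 // r_le_n andbT.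
have [t0 t0P _] := CM_type_res_surj s0 JLK Phi_CM.
split; split.
- by move=> not_middle; apply/critE => t _; exact: a_neq0.
- move=> n_even r_half; rewrite critE r_half; split=> [crit s | crit_s t _].
    have [t tP <-] := CM_type_res_surj s JLK Phi_CM.
    by move: (crit t tP); rewrite a_middle // subr_eq0 eq_sym.
  by rewrite a_middle // subr_eq0 eq_sym.
- split=> [[t tP] | r_gt]; first by rewrite nt_gtE.
  by exists t0 => //; rewrite nt_gtE.
- by split=> [/(_ t0 t0P) | r_gt t tP]; rewrite nt_gtE.
Qed.
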